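(* $\displaystyle\min_{\underline y\in\mathcal F}\sum_{j\in\tilde R}c_jy_j=\min_{\underline x\in\mathcal F_0}\sum_{j\in\tilde R}c_jx_j$. That is, the optimum value of the node-cut integer linear program equals the optimum cost of the multi-sink relay placement problem with hop bound $h_{\max}$.
   Context: Let $G=(V,E)$ be a finite undirected graph with $V=Q\cup R\cup B$ (pairwise disjoint), where $Q$ is the set of sources, $R$ the set of potential relay locations and $B$ the set of potential sink locations; let $h_{\max}$ be a positive integer and $c_s,c_r\ge0$. Form the augmented graph $\tilde G=(\tilde V,\tilde E)$ with $\tilde V=V\cup\{0\}$, where $0$ is a new vertex (virtual sink), and $\tilde E=E\cup\{\{0,b\}:b\in B\}$. Let $\tilde R=R\cup B$ with node costs $c_j=c_r$ for $j\in R$ and $c_j=c_s$ for $j\in B$. For a source $k\in Q$, a node cut for $k$ is a set $\gamma\subseteq\tilde V\setminus\{k,0\}$ whose deletion disconnects $k$ from $0$ in $\tilde G$; it is minimal if no proper subset is a node cut; $\Gamma^k$ denotes the set of minimal node cuts for $k$. A vector $\underline y=((y_{j,k})_{k\in Q,\,j\in\tilde V\setminus\{k,0\}},(y_j)_{j\in\tilde R})$ belongs to $\mathcal F$ (the feasible set of the ILP minimizing $\sum_{j\in\tilde R}c_jy_j$) iff: (i) $\sum_{j\in\gamma}y_{j,k}\ge1$ for all $\gamma\in\Gamma^k$, $k\in Q$; (ii) $y_j\ge y_{j,k}$ for all $j\in\tilde R$, $k\in Q$; (iii) $\sum_{j\in\tilde V\setminus\{k,0\}}y_{j,k}\le h_{\max}$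 for all $k\in Q$; (iv) all $y_{j,k},y_j\in\{0,1\}$. For $k\in Q$ let $\mathcal P'_k$ be the set of paths in $\tilde G$ from $k$ to $0$ with at most $h_{\max}+1$ edges, and let $\mathcal U_0$ be the set of tuples $\underline g=(p_k)_{k\in Q}$ with $p_k\in\mathcal P'_k$. For $\underline g\in\mathcal U_0$ define $\underline x(\underline g)$ by $x_{j,k}=1$ if $j$ is a vertex of $p_k$ and $0$ otherwise ($k\in Q$, $j\in\tilde V\setminus\{k,0\}$), and $x_j=1$ if $x_{j,k}=1$ for some $k\in Q$ and $0$ otherwise ($j\in\tilde R$). Let $\mathcal F_0=\{\underline x(\underline g):\underline g\in\mathcal U_0\}$; the minimum cost over $\mathcal F_0$ is the optimum cost of selecting sinks (cost $c_s$ each) and relays (cost $c_r$ each) so that every source has a path of at most $h_{\max}$ hops to a selected sink. A minimum over an empty set is taken to be $+\infty$. *)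

From HB Require Import structures.
From mathcomp Require Import all_boot all_order all_algebra.
Set Implicit Arguments. Unset Strict Implicit. Unset Printing Implicit Defensive.
Import Order.TTheory GRing.Theory Num.Theory.

Section Defs.
Variable V : finType.
(* undirected graph G = (V, e); Q sources, R relay locations, B sink locations *)
Variables (e : rel V) (Q R B : {set V}).

(* Augmented graph on option V: None is the virtual sink 0,
   with the extra edges {0,b} for b in B. *)
Definition aug_edge : rel (option V) := fun x y =>
  match x, y with
  | Some u, Some v => e u v
  | Some b, None => b \in B
  | None, Some b => b \in B
  | None, None => false
  end.

Definition Rt : {set V} := R :|: B.

(* gamma (a subset of Vt \ {k,0}, i.e. of V, not containing k) is a node cut for k:
   deleting gamma disconnects Some k from None in the augmented graph. *)
Definition is_node_cut (k : V) (gamma : {set V}) : bool :=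
  (k \notin gamma) &&
  ~~ connect [rel x y | [&& aug_edge x y, oapp (fun u => u \notin gamma) true x
                                       & oapp (fun u => u \notin gamma) true y]]
       (Some k) None.

Definition is_min_node_cut (k : V) (gamma : {set V}) : Prop :=
  is_node_cut k gamma /\ forall g' : {set V}, g' \proper gamma -> ~~ is_node_cut k g'.

(* A vector y = ((y_{j,k}), (y_j)) represented by two boolean functions:
   fst y k j = y_{j,k}, snd y j = y_j.  Entries outside the index set
   (k notin Q, or j = k; j notin Rt) are required to be 0. *)
Definition vec := ((V -> V -> bool) * (V -> bool))%type.

Definition supported (y : vec) : Prop :=
  (forall k j, y.1 k j -> (k \in Q) && (j != k)) /\
  (forall j, y.2 j -> j \in Rt).

Variable RR : realFieldType.
Variables (c_s c_r : RR) (hmax : nat).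

Definition cost_of (j : V) : RR := if j \in B then c_s else c_r.

Definition cost (y : vec) : RR := (\sum_(j in Rt) cost_of j * (y.2 j)%:R)%R.

Definition inF (y : vec) : Prop :=
  supported y /\
  (forall k, k \in Q -> forall gamma, is_min_node_cut k gamma ->
      (\sum_(j in gamma) (y.1 k j : nat) >= 1)%N) /\
  (forall j, j \in Rt -> forall k, k \in Q -> (y.1 k j <= y.2 j)%N) /\
  (forall k, k \in Q -> (\sum_(j | j != k) (y.1 k j : nat) <= hmax)%N).

(* Simple paths in the augmented graph from k to 0 with at most hmax+1 edges:
   vertex sequence Some k :: p, where size p is the number of edges. *)
Definition in_P' (k : V) (p : seq (option V)) : bool :=
  [&& path aug_edge (Some k) p, last (Some k) p == None,
      uniq (Some k :: p) & size p <= hmax.+1].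

(* x(g) for g = (p_k)_{k in Q}, represented as g : V -> seq (option V) *)
Definition xk (g : V -> seq (option V)) (k j : V) : bool :=
  [&& k \in Q, j != k & Some j \in g k].
Definition xj (g : V -> seq (option V)) (j : V) : bool :=
  (j \in Rt) && [exists k in Q, xk g k j].

Definition inF0 (x : vec) : Prop :=
  exists g : V -> seq (option V),
    (forall k, k \in Q -> in_P' k (g k)) /\
    (forall k j, x.1 k j = xk g k j) /\ (forall j, x.2 j = xj g j).

End Defs.

Definition is_min (T : Type) (RR : realFieldType) (P : T -> Prop) (f : T -> RR) (v : RR) :=
  (exists y, P y /\ f y = v) /\ (forall y, P y -> (v <= f y)%R).

From mathcomp Require Import all_boot all_order all_algebra.
Set Implicit Arguments. Unset Strict Implicit. Unset Printing Implicit Defensive.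
Import Order.TTheory GRing.Theory Num.Theory.

(** Every selection of hop-bounded paths satisfies the ILP: a minimal cut for
   [k] meets the path of [k], and a simple path with at most [hmax + 1] edges
   has at most [hmax] vertices besides [k] and [0].  Conversely, if [y] is
   feasible then the vertices [j] with [y_{j,k} = 1] together with [k] and [0]
   connect [k] to [0]: otherwise the remaining vertices would contain a
   minimal cut on which [y_{.,k}] vanishes.  A simple such path has at most
   [hmax + 1] edges and uses only relays opened by [y], so with nonnegative
   costs it is no more expensive.  Thus [F_0] is contained in [F] and
   dominates it, which forces equal minima. *)

Lemma sum_nat_bool_card (T : finType) (P b : pred T) :
  (\sum_(j | P j) (b j : nat) = #|[set j | P j && b j]|)%N.
Proof.
rewrite -sum1dep_card big_mkcondr /=.
by apply: eq_bigr => j _; case: (b j).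
Qed.

Lemma path_allr (T : Type) (r : rel T) (P : pred T) x p :
  (forall a b, r a b -> P b) -> path r x p -> all P p.
Proof.
move=> rP; elim: p x => //= a p IHp x /andP[rxa pa].
by rewrite (rP _ _ rxa) (IHp a).
Qed.

Section OptionEnum.

Variables (T : finType) (A : {set T}).

Lemma mem_option_enum o :
  (o \in None :: map Some (enum A)) = oapp (mem A) true o.
Proof.
case: o => [j|] //=; rewrite in_cons /= (mem_map (@Some_inj _)).
by rewrite mem_enum.
Qed.

Lemma uniq_option_enum : uniq (None :: map Some (enum A)).
Proof.
rewrite /= (map_inj_uniq (@Some_inj _)) enum_uniq andbT.
by apply/mapP => -[].
Qed.

Lemma size_option_enum : size (None :: map Some (enum A)) = #|A|.+1.
Proof. by rewrite /= size_map cardE. Qed.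

End OptionEnum.

Section NodeCuts.

Variables (V : finType) (e : rel V) (B : {set V}) (hmax : nat).

Lemma in_P'_card k p : in_P' e B hmax k p -> (#|[set j | Some j \in p]| <= hmax)%N.
Proof.
case/and4P=> _ /eqP p_last /andP[_ p_uniq] p_size.
have None_p : None \in p by move: (mem_last (Some k) p); rewrite p_last.
rewrite -ltnS -size_option_enum; apply: leq_trans p_size.
apply: uniq_leq_size (uniq_option_enum _) _ => o.
by rewrite mem_option_enum; case: o => [j|] //=; rewrite inE.
Qed.

Lemma node_cut_meets_path k gam p :
  is_node_cut e B k gam -> path (aug_edge e B) (Some k) p ->
  last (Some k) p = None -> exists2 j, j \in gam & Some j \in p.
Proof.
case/andP=> k_gam /negP not_conn p_path p_last.
apply/exists_inP/contraT; rewrite negb_exists_in => /forall_inP p_avoids.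
case: not_conn; apply/connectP; exists p => //.
apply: (@sub_in_path _ (oapp (fun u => u \notin gam) true) (aug_edge e B)) p_path.
  by move=> a b; rewrite -!topredE /= => a_ok b_ok ab; rewrite ab a_ok b_ok.
rewrite /= k_gam; apply/allP => -[j|] //= j_p.
by apply/negP => /p_avoids; rewrite j_p.
Qed.

Lemma min_node_cut_sub k gam :
  is_node_cut e B k gam ->
  exists2 gam' : {set V}, gam' \subset gam & is_min_node_cut e B k gam'.
Proof.
move=> cut_gam.
have sub_cut : exists A, is_node_cut e B k A && (A \subset gam).
  by exists gam; rewrite cut_gam subxx.
have [gam' /minsetP[/andP[cut' sub'] min']] := ex_minset sub_cut.
exists gam' => //; split=> // g' proper_g'; apply/negP => cut_g'.
have sub_g' := proper_sub proper_g'.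
have := min' g'; rewrite cut_g' (subset_trans sub_g' sub') => /(_ isT sub_g') eq_g'.
by rewrite eq_g' properE subxx in proper_g'.
Qed.

Lemma path_within_of_min_cuts k (A : {set V}) :
  (forall gam, is_min_node_cut e B k gam -> [exists j in gam, j \in A]) ->
  exists p, [&& path (aug_edge e B) (Some k) p, last (Some k) p == None,
                uniq (Some k :: p) & all (oapp (mem A) true) p].
Proof.
move=> hits; set gam := ~: (k |: A).
have : connect [rel a b | [&& aug_edge e B a b, oapp (fun u => u \notin gam) true a
                                       & oapp (fun u => u \notin gam) true b]]
         (Some k) None.
  apply/contraT => not_conn.
  have gam_cut : is_node_cut e B k gam by rewrite /is_node_cut !inE eqxx.
  have [gam' sub_gam' /hits /exists_inP[j j_gam' j_A]] := min_node_cut_sub gam_cut.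
  by move: (subsetP sub_gam' j j_gam'); rewrite !inE j_A orbT.
case/connectP=> p p_path; case: (shortenP p_path) => p' p'_path p'_uniq _ p'_last.
exists p'; rewrite p'_uniq -p'_last eqxx (sub_path _ p'_path) => [|a b /and3P[] //].
have /allP p'_in : all (oapp (fun u => u \notin gam) true) p'.
  by apply: path_allr p'_path => a b /and3P[].
apply/allP => -[j|] // j_p'; move: (p'_in _ j_p'); rewrite /= !inE negbK.
by case/orP=> [/eqP j_k|//]; move: p'_uniq; rewrite /= -j_k j_p'.
Qed.

End NodeCuts.

Section Feasibility.

Variables (V : finType) (e : rel V) (Q R B : {set V}) (hmax : nat).

Lemma inF0_inF x : inF0 e Q R B hmax x -> inF e Q R B hmax x.
Proof.
case=> g [g_paths [x1E x2E]].
split; [split|split; [|split]].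
- by move=> k j; rewrite x1E => /and3P[-> -> _].
- by move=> j; rewrite x2E => /andP[].
- move=> k k_Q gam [gam_cut _].
  case/and4P: (g_paths k k_Q) => g_path /eqP g_last _ _.
  have [j j_gam j_g] := node_cut_meets_path gam_cut g_path g_last.
  have j_k : j != k by apply: contraTneq j_gam => ->; case/andP: gam_cut.
  by rewrite (bigD1 j) //= x1E /xk k_Q j_k j_g.
- move=> j j_Rt k k_Q; rewrite x1E x2E /xj j_Rt.
  case xkj: (xk Q g k j) => //; rewrite lt0b.
  by apply/exists_inP; exists k.
- move=> k k_Q; under eq_bigr do rewrite x1E.
  rewrite sum_nat_bool_card; apply: leq_trans (in_P'_card (g_paths k k_Q)).
  by apply/subset_leq_card/subsetP => j; rewrite !inE => /and4P[].
Qed.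

Lemma inF_path y k : inF e Q R B hmax y -> k \in Q ->
  exists2 p, in_P' e B hmax k p & all (oapp (y.1 k) true) p.
Proof.
case=> _ [y_cuts [_ y_hops]] k_Q.
set A := [set j | (j != k) && y.1 k j].
have hits gam : is_min_node_cut e B k gam -> [exists j in gam, j \in A].
  move=> gam_min; have [/andP[k_gam _] _] := gam_min.
  move: (y_cuts k k_Q gam gam_min); apply: contraTT.
  rewrite negb_exists_in => /forall_inP gam_A; rewrite big1 // => j j_gam.
  move: (gam_A j j_gam); rewrite inE; case: eqP => [j_k|_ /= /negbTE -> //].
  by rewrite -j_k j_gam in k_gam.
have [p /and4P[p_path /eqP p_last p_uniq p_A]] := path_within_of_min_cuts hits.
exists p; last by apply: sub_all p_A => -[j|] //=; rewrite inE => /andP[].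
rewrite /in_P' p_path p_last eqxx p_uniq /=.
have p_sub : {subset p <= None :: map Some (enum A)}.
  by move=> o o_p; rewrite mem_option_enum; exact: (allP p_A).
have := uniq_leq_size (proj2 (andP p_uniq)) p_sub.
rewrite size_option_enum => /leq_trans; apply; rewrite ltnS.
by rewrite -sum_nat_bool_card; exact: y_hops.
Qed.

Section Costs.

Variables (RR : realFieldType) (c_s c_r : RR).
Hypotheses (c_s_ge0 : (0 <= c_s)%R) (c_r_ge0 : (0 <= c_r)%R).

Lemma cost_le_support (x y : vec V) :
  (forall j, j \in Rt R B -> x.2 j -> y.2 j) ->
  (cost R B c_s c_r x <= cost R B c_s c_r y)%R.
Proof.
move=> xy; apply: ler_sum => j j_Rt; apply: ler_wpM2l.
  by rewrite /cost_of; case: (j \in B).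
by rewrite ler_nat; case x_j: (x.2 j); rewrite // lt0b xy.
Qed.

Lemma inF_dominated y : inF e Q R B hmax y ->
  exists2 x, inF0 e Q R B hmax x & (cost R B c_s c_r x <= cost R B c_s c_r y)%R.
Proof.
move=> y_F.
have /fin_all_exists[g g_spec] : forall k, exists p,
    k \in Q -> in_P' e B hmax k p && all (oapp (y.1 k) true) p.
  move=> k; case: (boolP (k \in Q)) => [k_Q|]; last by exists [::].
  by have [p p_P' p_y] := inF_path y_F k_Q; exists p; rewrite p_P' p_y.
exists (xk Q g, xj Q R B g).
  by exists g; split=> // k /g_spec /andP[].
case: y_F => _ [_ [y_le _]].
apply: cost_le_support => j j_Rt /=.
rewrite /xj j_Rt => /exists_inP[k k_Q /and3P[_ _ j_g]].
have /andP[_ /allP g_y] := g_spec k k_Q.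
have y_kj : y.1 k j := g_y _ j_g.
by move: (y_le j j_Rt k k_Q); rewrite y_kj lt0b.
Qed.

End Costs.

End Feasibility.

Lemma is_min_dominated (T : Type) (RR : realFieldType) (P P0 : T -> Prop) (f : T -> RR) :
  (forall x, P0 x -> P x) -> (forall y, P y -> exists2 x, P0 x & (f x <= f y)%R) ->
  forall v, is_min P f v <-> is_min P0 f v.
Proof.
move=> P0_P P_dom v; split=> -[[y [Py fy]] v_lb].
  have [x P0x fx] := P_dom y Py.
  split; last by move=> z /P0_P; exact: v_lb.
  exists x; split=> //; apply/le_anti/andP; split; [by rewrite -fy | exact/v_lb/P0_P].
split; first by exists y; split=> //; exact: P0_P.
by move=> z /P_dom[x P0x fx]; exact: le_trans (v_lb _ P0x) fx.
Qed.

Theorem theorem4 (V : finType) (e : rel V) (Q R B : {set V})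
  (RR : realFieldType) (c_s c_r : RR) (hmax : nat) :
  symmetric e -> irreflexive e ->
  [disjoint Q & R] -> [disjoint Q & B] -> [disjoint R & B] ->
  Q :|: R :|: B = [set: V] ->
  (0 < hmax)%N -> (0 <= c_s)%R -> (0 <= c_r)%R ->
  ((exists y, inF e Q R B hmax y) <-> (exists x, inF0 e Q R B hmax x)) /\
  (forall v : RR,
     is_min (inF e Q R B hmax) (cost R B c_s c_r) v <->
     is_min (inF0 e Q R B hmax) (cost R B c_s c_r) v).
Proof.
move=> _ _ _ _ _ _ _ c_s_ge0 c_r_ge0.
have dominated := @inF_dominated V e Q R B hmax RR c_s c_r c_s_ge0 c_r_ge0.
split; last by apply: is_min_dominated => [x|y]; [exact: inF0_inF | exact: dominated].
split=> -[y y_F]; last by exists y; exact: inF0_inF.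
by have [x x_F0 _] := dominated y y_F; exists x.
Qed.
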